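(* Let $G$ be a group of finite order $n$ whose Sylow $2$-subgroups are non-trivial and cyclic. Then the Cayley table of $G$ contains no $k$-plex for any odd $k$, but the Cayley table has a $2$-partition, and hence contains a $k$-plex for every even $k$ with $0\le k\le n$.
   Context: The Cayley table of a finite group $G$ is the latin square with rows and columns indexed by the elements of $G$ whose entry in row $x$, column $y$ is $xy$. A $k$-plex in a latin square of order $n$ is a set of $kn$ cells containing exactly $k$ cells from each row, exactly $k$ cells from each column, and exactly $k$ occurrences of each symbol. A $2$-partition of a latin square is a partition of its set of cells into pairwise disjoint $2$-plexes. *)

From mathcomp Require Import all_boot all_fingroup all_solvable.
Set Implicit Arguments. Unset Strict Implicit. Unset Printing Implicit Defensive.

(* Cayley table of the finite group gT: cells are pairs (x, y) : gT * gT,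
   entry in row x, column y is x * y. *)

Definition is_kplex (gT : finGroupType) (k : nat) (P : {set gT * gT}) : Prop :=
  [/\ #|P| = k * #|gT|,
      forall x : gT, #|[set c in P | c.1 == x]| = k,
      forall y : gT, #|[set c in P | c.2 == y]| = k &
      forall z : gT, #|[set c in P | (c.1 * c.2)%g == z]| = k].

Definition is_two_partition (gT : finGroupType) (Q : {set {set gT * gT}}) : Prop :=
  partition Q [set: gT * gT] /\ forall P, P \in Q -> is_kplex 2 P.

From mathcomp Require Import all_boot all_fingroup all_solvable.
From mathcomp Require Import zify.
Set Implicit Arguments. Unset Strict Implicit. Unset Printing Implicit Defensive.

(* Let <[g]> be a Sylow 2-subgroup, of order m = 2^e with e > 0.
   1. Normal 2-complement.  Right translation by an element of order 2^(b+1)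
      and odd index in H is a product of cycles of even length, hence odd; the
      even translations form a normal subgroup of index 2 of H, containing
      g^2.  Iterating e times from H = G gives N normal of odd order with
      |G| = |N| m, so every x is uniquely npart x * g ^+ level x.
   2. level : G -> Z/m is a morphism.  Summing it over a k-plex by rows, by
      columns and by symbols gives k |N| m(m-1)/2 = 0 mod m: k is even.
   3. Label the cell (u g^i, v g^j) by (floor((j - i mod m) / 2), u^-1 v^(g^-i)).
      Each label class is a 2-plex: in a row or a column the label fixes the
      other N-coordinate and two residues; for the symbol p g^s it forces
      u^2 = p t^-1, which has a unique root in N as |N| is odd, and two
      residues i.  The classes form a 2-partition, and unions of k/2 classes
      are k-plexes. *)

Local Open Scope group_scope.

Section TranslationSign.
Variables (gT : finGroupType) (H : {group gT}).

(* Right translation by x restricted to H: z |-> z x on H, identity off H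
   (x is replaced by 1 when x is not in H, so that this is always a bijection). *)
Definition htrans_fun (x z : gT) : gT :=
  if z \in H then z * (if x \in H then x else 1) else z.

Lemma htrans_fun_inj x : injective (htrans_fun x).
Proof.
rewrite /htrans_fun; have aH : (if x \in H then x else 1) \in H by case: ifP.
move: (if x \in H then x else 1) aH => a aH z1 z2.
case: ifP => h1; case: ifP => h2 //.
- exact: mulIg.
- by move=> e; move: h2; rewrite -e groupM.
- by move=> e; move: h1; rewrite e groupM.
Qed.

Definition htrans x : {perm gT} := perm (@htrans_fun_inj x).

Lemma htransE x z : htrans x z = if z \in H then z * (if x \in H then x else 1) else z.
Proof. by rewrite permE. Qed.

Lemma htransM x y : x \in H -> y \in H -> htrans (x * y) = htrans x * htrans y.
Proof.
move=> xH yH; apply/permP => z; rewrite permM !htransE groupM // xH yH.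
by case: ifP => zH; rewrite ?groupM ?zH ?mulgA.
Qed.

Lemma htransX g z i : g \in H -> z \in H -> (htrans g ^+ i) z = z * g ^+ i.
Proof.
move=> gH zH; elim: i => [|i IH]; first by rewrite expg0 perm1 expg0 mulg1.
by rewrite expgSr permM IH htransE groupM ?groupX // gH expgSr mulgA.
Qed.

Definition hsign x : bool := odd_perm (htrans x).

Lemma hsignM x y : x \in H -> y \in H -> hsign (x * y) = hsign x (+) hsign y.
Proof. by move=> xH yH; rewrite /hsign htransM // odd_permM. Qed.

Lemma hsign1 : hsign 1 = false.
Proof. by have := hsignM (group1 H) (group1 H); rewrite mulg1 addbb. Qed.

Lemma hsignV x : x \in H -> hsign x^-1 = hsign x.
Proof.
move=> xH; have := hsignM (groupVr xH) xH.
by rewrite mulVg hsign1; case: (hsign x^-1); case: (hsign x).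
Qed.

(* Conjugating by an element normalizing H conjugates the translation
   permutations, so the sign is conjugation invariant. *)
Lemma hsignJ x y : y \in 'N(H) -> x \in H -> hsign (x ^ y) = hsign x.
Proof.
move=> nHy xH; have xyH : x ^ y \in H by rewrite memJ_norm.
pose c : {perm gT} := perm (can_inj (conjgK y)).
rewrite /hsign; suff -> : htrans (x ^ y) = htrans x ^ c by rewrite odd_permJ.
apply/permP => w; rewrite -(conjgKV y w).
have -> : (w ^ y^-1) ^ y = c (w ^ y^-1) by rewrite permE.
rewrite permJ /c permE !htransE xH xyH memJ_norm //.
rewrite permE; case: (w ^ y^-1 \in H) => //; by rewrite -conjMg.
Qed.

(* The cycles of htrans g are the left cosets z <[g]> inside H and the
   fixed points outside H. *)
Lemma card_porbits_htrans g : g \in H ->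
  #|porbits (htrans g)| = (#|H : <[g]>| + #|~: H|)%N.
Proof.
move=> gH; have orbitH z : z \in H -> porbit (htrans g) z = z *: <[g]>.
  move=> zH; apply/setP => w; apply/porbitP/lcosetP.
  - by case=> i ->; exists (g ^+ i); rewrite ?mem_cycle ?htransX.
  - by case=> a /cycleP[i ->] ->; exists i; rewrite htransX.
have orbitC : {in ~: H, porbit (htrans g) =1 set1}.
  move=> z; rewrite inE => zH; apply/setP => w; rewrite inE.
  apply/porbitP/eqP => [[i ->]|->]; last by exists 0; rewrite expg0 perm1.
  by rewrite permX_fix // htransE (negbTE zH).
have -> : porbits (htrans g) = porbit (htrans g) @: (H :|: ~: H).
  rewrite setUCr; apply/setP => o.
  by apply/imsetP/imsetP; case=> z _ ->; exists z.
rewrite imsetU cardsU (eq_in_imset orbitC).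
have -> : porbit (htrans g) @: H = lcosets <[g]> H.
  by apply: eq_in_imset => z zH; rewrite orbitH // lcosetE.
rewrite card_lcosets card_imset; last exact: set1_inj.
suff -> : lcosets <[g]> H :&: [set [set x] | x in ~: H] = set0.
  by rewrite cards0 subn0.
apply/setP => o; rewrite !inE; apply/andP; case=> /imsetP[z zH ->] /imsetP[w].
rewrite inE => wH ez; have : z \in lcoset <[g]> z by rewrite lcosetE mem_lcoset mulVg group1.
by rewrite ez inE => /eqP zw; move: wH; rewrite -zw zH.
Qed.

(* An element of 2-power order 2^(b+1) and odd index (#|H| / 2^(b+1)) in H
   translates H as |H|/2^(b+1) cycles of even length: an odd permutation. *)
Lemma hsign_2elt g b : g \in H -> #[g] = (2 ^ b.+1)%N ->
  odd (#|H| %/ 2 ^ b.+1) -> hsign g.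
Proof.
move=> gH og oddi; rewrite /hsign /odd_perm card_porbits_htrans //.
rewrite -divgS ?cycle_subG // -orderE og.
have -> : #|~: H| = (#|gT| - #|H|)%N by rewrite -(cardsC H) addKn.
have evH : ~~ odd #|H|.
  rewrite -dvdn2; apply: dvdn_trans (order_dvdG gH).
  by rewrite og expnS dvdn_mulr.
by rewrite oddD oddB ?max_card // oddi (negbTE evH); case: (odd #|gT|).
Qed.

Definition heven : {set gT} := [set x in H | ~~ hsign x].

Lemma heven_group_set : group_set heven.
Proof.
apply/group_setP; split; first by rewrite inE group1 hsign1.
move=> x y; rewrite !inE => /andP[xH sx] /andP[yH sy].
by rewrite groupM // hsignM // (negbTE sx) (negbTE sy).
Qed.

Canonical heven_group := Group heven_group_set.

Lemma heven_sub : heven \subset H.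
Proof. by apply/subsetP => x; rewrite inE => /andP[]. Qed.

(* If some g in H is odd, the odd elements form the coset heven * g. *)
Lemma card_heven g : g \in H -> hsign g -> (#|heven| * 2)%N = #|H|.
Proof.
move=> gH sg; have oddE : H :\: heven = (fun x => x * g) @: heven.
  apply/setP => x; rewrite !inE; apply/andP/imsetP.
  - case=> /negP nk xH; exists (x * g^-1); last by rewrite mulgKV.
    rewrite inE groupM ?groupV //= hsignM ?groupV // hsignV // sg.
    by case: (hsign x) nk => //; rewrite xH.
  - case=> y; rewrite inE => /andP[yH sy] ->; split; last by rewrite groupM.
    by rewrite groupM // hsignM // sg (negbTE sy).
rewrite -(cardsID heven H) (setIidPr heven_sub) oddE card_imset; last exact: mulIg.
by rewrite muln2 addnn.
Qed.

Lemma heven_norm y : y \in 'N(H) -> y \in 'N(heven).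
Proof.
move=> nHy; apply/normP/eqP; rewrite eqEcard cardJg leqnn andbT.
apply/subsetP => x; rewrite mem_conjg !inE => /andP[xH sx].
have -> : x = (x ^ y^-1) ^ y by rewrite conjgKV.
by rewrite memJ_norm // xH /= hsignJ.
Qed.

End TranslationSign.

(* Passing from H to its even part halves the 2-part of the order and keeps
   normality; iterating b times along g, g^2, g^4, ... removes the factor 2^b
   and leaves a normal subgroup of odd order. *)
Lemma odd_normal_subgroup (gT : finGroupType) b : forall (H : {group gT}) g,
  (forall y, y \in 'N(H)) -> g \in H -> #[g] = (2 ^ b)%N -> odd (#|H| %/ 2 ^ b) ->
  exists N : {group gT},
    [/\ forall y, y \in 'N(N), odd #|N| & (#|N| * 2 ^ b)%N = #|H|].
Proof.
elim: b => [|b IH] H g nH gH og oddH.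
  by exists H; rewrite expn0 muln1; rewrite expn0 divn1 in oddH.
have sg : hsign H g by apply: hsign_2elt og oddH.
have g2E : g ^+ 2 \in heven H by rewrite inE groupX //= expgS expg1 hsignM // sg.
have og2 : #[g ^+ 2] = (2 ^ b)%N.
  by rewrite orderXdiv og ?expnS ?mulKn // dvdn_mulr.
have oddE : odd (#|heven H| %/ 2 ^ b).
  by rewrite -(@divnMr 2) // -expnSr (card_heven gH sg).
have nE y : y \in 'N(heven H) by apply: heven_norm.
have [N [nN oN cN]] := IH (heven_group H) (g ^+ 2) nE g2E og2 oddE.
by exists N; split => //; rewrite expnSr mulnA cN (card_heven gH sg).
Qed.

Lemma cyclic_Sylow2_split (gT : finGroupType) :
  (forall S : {group gT}, S \in 'Syl_2([set: gT]) -> S :!=: 1 /\ cyclic S) ->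
  exists (N : {group gT}) (g : gT), [/\ forall y, y \in 'N(N), odd #|N|,
     ~~ odd #[g], coprime #|N| #[g] & (#|N| * #[g])%N = #|gT| ].
Proof.
move=> hSyl; have [S sylS] := Sylow_exists 2 [set: gT].
have [ntS /cyclicP[g defS]] : S :!=: 1 /\ cyclic S by apply: hSyl; rewrite inE.
set e := logn 2 #|gT|.
have og : #[g] = (2 ^ e)%N by rewrite orderE -defS (card_Hall sylS) cardsT p_part.
have e_gt0 : (0 < e)%N.
  by rewrite lt0n; apply: contra ntS => /eqP e0; rewrite trivg_card1 defS -orderE og e0.
have oddq : odd (#|[set: gT]| %/ 2 ^ e).
  have n_gt0 : (0 < #|gT|)%N by rewrite -cardsT cardG_gt0.
  rewrite cardsT -{1}(partnC 2 n_gt0) p_part mulKn ?expn_gt0 // odd_2'nat.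
  exact: part_pnat.
have nG y : y \in 'N([set: gT]) by rewrite normT inE.
have [N [nN oN cN]] := odd_normal_subgroup nG (in_setT g) og oddq.
exists N, g; split => //.
- by rewrite og -(prednK e_gt0) expnS mul2n odd_double.
- by rewrite og coprimeXr // coprimen2.
- by rewrite og cN cardsT.
Qed.

Section Plexes.
Variable gT : finGroupType.
Implicit Types (P : {set gT * gT}) (k : nat).

Lemma sum_over_fibres (T rT : finType) (P : {set T}) (phi : T -> rT) k (h : rT -> nat) :
  (forall z, #|[set c in P | phi c == z]| = k) ->
  (\sum_(c in P) h (phi c) = k * \sum_z h z)%N.
Proof.
move=> hk; rewrite (partition_big phi xpredT) //= big_distrr /=.
apply: eq_bigr => z _; rewrite (eq_bigr (fun _ => h z)); last by move=> c /andP[_ /eqP ->].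
rewrite sum_nat_const -(hk z); congr (_ * _)%N.
by apply: eq_card => c; rewrite inE.
Qed.

Lemma card_row_cells P x : #|[set c in P | c.1 == x]| = #|[set y | (x, y) \in P]|.
Proof.
rewrite -[RHS](card_imset _ (fun y1 y2 (e : (x, y1) = (x, y2)) => congr1 snd e)).
apply: eq_card => -[x' y]; rewrite !inE; apply/andP/imsetP => /= [[cP /eqP ex]|[y' y'P [-> ->]]].
  by exists y; rewrite ?inE -?ex.
by rewrite inE in y'P.
Qed.

Lemma card_col_cells P y : #|[set c in P | c.2 == y]| = #|[set x | (x, y) \in P]|.
Proof.
rewrite -[RHS](card_imset _ (fun x1 x2 (e : (x1, y) = (x2, y)) => congr1 fst e)).
apply: eq_card => -[x y']; rewrite !inE; apply/andP/imsetP => /= [[cP /eqP ey]|[x' x'P [-> ->]]].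
  by exists x; rewrite ?inE -?ey.
by rewrite inE in x'P.
Qed.

Lemma card_symbol_cells P z :
  #|[set c in P | c.1 * c.2 == z]| = #|[set x | (x, x^-1 * z) \in P]|.
Proof.
rewrite -[RHS](card_imset _ (fun x1 x2 (e : (x1, x1^-1 * z) = (x2, x2^-1 * z)) => congr1 fst e)).
apply: eq_card => -[x y]; rewrite !inE; apply/andP/imsetP => /= [[cP /eqP ez]|[x' x'P [-> ->]]].
  by exists x; rewrite ?inE -ez ?mulKg.
by rewrite inE in x'P; rewrite mulKVg.
Qed.

Lemma kplex0 : is_kplex 0 (set0 : {set gT * gT}).
Proof.
have E (p : pred (gT * gT)) : #|[set c in (set0 : {set gT * gT}) | p c]| = 0%N.
  by apply/eqP; rewrite cards_eq0; apply/eqP/setP => c; rewrite !inE.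
by split => //; rewrite cards0.
Qed.

Lemma card_setU_pred (T : finType) (A B : {set T}) (p : pred T) : [disjoint A & B] ->
  #|[set c in A :|: B | p c]| = (#|[set c in A | p c]| + #|[set c in B | p c]|)%N.
Proof.
move=> dAB; rewrite !setIdE setIUl cardsU.
suff -> : A :&: [set x | p x] :&: (B :&: [set x | p x]) = set0 by rewrite cards0 subn0.
apply/eqP; rewrite setI_eq0.
by apply: disjointWr (subsetIl _ _) (disjointWl (subsetIl _ _) dAB).
Qed.

Lemma kplexU k P1 P2 : [disjoint P1 & P2] ->
  is_kplex k P1 -> is_kplex 2 P2 -> is_kplex (k + 2) (P1 :|: P2).
Proof.
move=> d [c1 r1 l1 s1] [c2 r2 l2 s2]; split.
- by rewrite cardsU c1 c2 mulnDl (disjoint_setI0 d) cards0 subn0.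
- by move=> x; rewrite card_setU_pred // r1 r2.
- by move=> y; rewrite card_setU_pred // l1 l2.
- by move=> z; rewrite card_setU_pred // s1 s2.
Qed.

Lemma kplex_cover_two_partition (Q : {set {set gT * gT}}) :
  is_two_partition Q -> forall l, (l <= #|Q|)%N ->
  exists Q' : {set {set gT * gT}},
    [/\ Q' \subset Q, #|Q'| = l & is_kplex (2 * l) (cover Q')].
Proof.
case=> /and3P[_ tQ _] hQ; elim=> [|l IH] ltl.
  by exists set0; rewrite sub0set cards0 /cover big_set0; split => //; apply: kplex0.
have [Q' [sQ' cQ' pQ']] := IH (ltnW ltl).
have [B BQ BQ'] : exists2 B, B \in Q & B \notin Q'.
  apply/subsetPn; apply: contraTN ltl => sQ.
  by rewrite -leqNgt -cQ' subset_leq_card.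
exists (B |: Q'); split; first by rewrite subUset sub1set BQ sQ'.
  by rewrite cardsU1 BQ' cQ'.
rewrite /cover big_setU1 //= setUC mulnSr; apply: kplexU (pQ') (hQ B BQ).
rewrite -setI_eq0; apply/eqP/setP => c; rewrite !inE; apply/negbTE.
apply/andP => -[/bigcupP[B' B'Q' cB'] cB].
have nBB' : B' != B by apply: contraNneq BQ' => <-.
have := trivIsetP tQ B' B (subsetP sQ' _ B'Q') BQ nBB'.
by rewrite disjoint_subset => /subsetP /(_ c cB'); rewrite inE cB.
Qed.

End Plexes.

Section ModularDifference.
Variable m : nat.

Definition mdiff i j : nat := ((j + m - i) %% m)%N.

Lemma mdiff_lt i j : (0 < m)%N -> (mdiff i j < m)%N.
Proof. exact: ltn_pmod. Qed.

Lemma mdiff_eqR i j e : (i < m)%N -> (j < m)%N -> (e < m)%N ->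
  (mdiff i j == e) = (j == (i + e) %% m).
Proof.
move=> lti ltj lte; have iJ : (i <= j + m)%N by rewrite ltnW // ltn_addl.
rewrite /mdiff -{1}(modn_small lte) -(eqn_modDr i) subnK // modnDr.
by rewrite (modn_small ltj) addnC.
Qed.

Lemma mdiff_eqL i j e : (i < m)%N -> (j < m)%N -> (e < m)%N ->
  (mdiff i j == e) = (i == mdiff e j).
Proof.
move=> lti ltj lte; rewrite mdiff_eqR //.
have eJ : (e <= j + m)%N by rewrite ltnW // ltn_addl.
rewrite /mdiff -{2}(modn_small lti) -(eqn_modDr e i (j + m - e)) subnK //.
by rewrite modnDr (modn_small ltj) eq_sym.
Qed.

Lemma mdiffK i j : (i < m)%N -> (j < m)%N -> mdiff (mdiff i j) j = i.
Proof.
move=> lti ltj; have m_gt0 : (0 < m)%N by apply: leq_ltn_trans lti.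
by apply/eqP; rewrite mdiff_eqL ?mdiff_lt.
Qed.

Lemma mdiff_eq2 i i' j : (i < m)%N -> (i' < m)%N -> (j < m)%N ->
  (mdiff i j == mdiff i' j) = (i == i').
Proof.
move=> lti lti' ltj; have m_gt0 : (0 < m)%N by apply: leq_ltn_trans lti.
by rewrite mdiff_eqL ?mdiff_lt ?mdiffK.
Qed.

Lemma half_eq d a : (d./2 == a) = (d == a.*2) || (d == a.*2.+1).
Proof. by apply/eqP/orP; lia. Qed.

Lemma mdiff_half_eqR i j a : (i < m)%N -> (j < m)%N -> (a.*2.+1 < m)%N ->
  ((mdiff i j)./2 == a) = (j == (i + a.*2) %% m) || (j == (i + a.*2.+1) %% m).
Proof. by move=> lti ltj lta; rewrite half_eq !mdiff_eqR // ltnW. Qed.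

Lemma mdiff_half_eqL i j a : (i < m)%N -> (j < m)%N -> (a.*2.+1 < m)%N ->
  ((mdiff i j)./2 == a) = (i == mdiff a.*2 j) || (i == mdiff a.*2.+1 j).
Proof. by move=> lti ltj lta; rewrite half_eq !mdiff_eqL // ltnW. Qed.

Lemma odd_mdiff i j : ~~ odd m -> (i < m)%N -> odd (mdiff i j) = odd (i + j).
Proof.
move=> evm lti; have iJ : (i <= j + m)%N by rewrite ltnW // ltn_addl.
rewrite /mdiff odd_mod ?(negbTE evm) // oddB // !oddD (negbTE evm).
by case: (odd i); case: (odd j).
Qed.

End ModularDifference.

Lemma half_eq_odd d a : (d./2 == a) = (d == a.*2 + odd d).
Proof. by apply/eqP/eqP; lia. Qed.

Lemma mod_half_eq h i c : (c < h)%N -> (i < h.*2)%N ->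
  (i %% h == c) = (i == c) || (i == c + h).
Proof.
move=> ltc lti; case: (ltnP i h) => hi.
  by rewrite modn_small //; apply/eqP/orP; lia.
have -> : (i %% h = i - h)%N by rewrite -{1}(subnK hi) modnDr modn_small //; lia.
by apply/eqP/orP; lia.
Qed.

(* With m = 2h and s = i + j mod m, the residues i with
   floor((j - i mod m) / 2) = a are the two solutions c and c + h of
   2i = s - (2a + parity of s) modulo m. *)
Lemma mdiff_half_eq_sum m h i j s a : m = h.*2 ->
  (i < m)%N -> (j < m)%N -> ((i + j) %% m)%N = s -> (a < h)%N ->
  ((mdiff m i j)./2 == a) = (i == (mdiff m (a.*2 + odd s) s)./2)
                             || (i == (mdiff m (a.*2 + odd s) s)./2 + h).
Proof.
move=> mE lti ltj sE lta; set c := (mdiff m _ s)./2.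
have evm : ~~ odd m by rewrite mE odd_double.
have m_gt0 : (0 < m)%N by apply: leq_ltn_trans lti.
have lts : (s < m)%N by rewrite -sE ltn_pmod.
set e := (a.*2 + odd s)%N; have lte : (e < m)%N.
  by rewrite /e mE; case: (odd s); rewrite ?addn1 ?addn0 ?ltn_double ?ltn_Sdouble.
have oddm : odd m = false by apply: negbTE.
rewrite half_eq_odd odd_mdiff // -(odd_mod _ oddm) sE -/e mdiff_eqR //.
have -> : (j == (i + e) %% m) = (mdiff m e s == i.*2 %% m).
  rewrite mdiff_eqR ?ltn_pmod // -sE -{1}(modn_small ltj).
  by rewrite -(eqn_modDl i) modnDmr eq_sym addnA addnn addnC.
have wE : mdiff m e s = c.*2.
  rewrite /c -[LHS]odd_double_half odd_mdiff // /e !oddD odd_double.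
  by case: (odd s).
have ltc : (c < h)%N by rewrite -ltn_double -wE -mE mdiff_lt.
by rewrite wE mE -!mul2n -muln_modr eqn_pmul2l // eq_sym mod_half_eq // -mE.
Qed.

Lemma mod_addS_neq m i e : (e.+1 < m)%N -> ((i + e) %% m != (i + e.+1) %% m)%N.
Proof.
move=> lte; rewrite eqn_modDl !modn_small ?(ltnW lte) //.
by rewrite neq_ltn ltnSn.
Qed.

(* For even m and odd c, m does not divide c * m(m-1)/2: the parity
   obstruction to odd plexes. *)
Lemma bin2_odd_ndvd m c : ~~ odd m -> (0 < m)%N -> odd c -> ~~ (m %| c * 'C(m, 2))%N.
Proof.
move=> evm m_gt0 oc; set h := m./2.
have mE : m = h.*2 by rewrite halfK (negbTE evm) subn0.
have h_gt0 : (0 < h)%N by rewrite -double_gt0 -mE.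
have -> : 'C(m, 2) = (h * m.-1)%N by rewrite bin2 {1}mE -doubleMl doubleK.
rewrite {1}mE -muln2 mulnCA dvdn_pmul2l // dvdn2 oddM oc /=.
by rewrite -subn1 oddB // (negbTE evm).
Qed.

Section OddSquareRoots.
Variables (gT : finGroupType) (N : {group gT}).
Hypothesis oN : odd #|N|.

Definition sqrtg (q : gT) : gT := q ^+ (#|N|.+1)./2.

Lemma expg_half_double u : u \in N -> u ^+ ((#|N|.+1)./2).*2 = u.
Proof. by move=> uN; rewrite halfK /= oN subn0 expgS expg_cardG // mulg1. Qed.

Lemma sqrtgP u q : u \in N -> q \in N -> (u ^+ 2 == q) = (u == sqrtg q).
Proof.
move=> uN qN; apply/eqP/eqP => [<-|->].
  by rewrite /sqrtg -expgM mul2n expg_half_double.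
by rewrite /sqrtg -expgM muln2 expg_half_double.
Qed.

Lemma sqrtg_in q : q \in N -> sqrtg q \in N.
Proof. exact: groupX. Qed.

End OddSquareRoots.

Section SplitCayleyTable.
Variables (gT : finGroupType) (N : {group gT}) (g : gT).
Hypotheses (nN : forall y, y \in 'N(N)) (oN : odd #|N|) (evg : ~~ odd #[g])
  (coNg : coprime #|N| #[g]) (cN : (#|N| * #[g])%N = #|gT|).

Local Notation m := #[g].

Lemma N_cycle_TI : N :&: <[g]> = 1.
Proof. by apply: coprime_TIg; rewrite -orderE. Qed.

Lemma N_cycle_full : N * <[g]> = [set: gT].
Proof.
apply/eqP; rewrite eqEcard subsetT cardsT TI_cardMg ?N_cycle_TI //.
by rewrite -orderE cN leqnn.
Qed.

(* The level of x is the unique i < #[g] with x in N g^i; it identifies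
   G / N with Z/#[g]. *)
Definition level x : nat :=
  if [pick i : 'I_m | x * (g ^+ i)^-1 \in N] is Some i then val i else 0%N.

Lemma level_uniq x i j : (i < m)%N -> (j < m)%N ->
  x * (g ^+ i)^-1 \in N -> x * (g ^+ j)^-1 \in N -> i = j.
Proof.
move=> lti ltj hi hj.
have : (x * (g ^+ i)^-1)^-1 * (x * (g ^+ j)^-1) \in N :&: <[g]>.
  rewrite inE groupM ?groupV //= invMg invgK mulgA mulgKV.
  by rewrite groupM ?groupV // mem_cycle.
rewrite N_cycle_TI inE invMg invgK mulgA mulgKV => /eqP e.
have : g ^+ i == g ^+ j by rewrite -(mulgKV (g ^+ j) (g ^+ i)) e mul1g.
by rewrite eq_expg_mod_order !modn_small // => /eqP.
Qed.

Lemma level_lt x : (level x < m)%N.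
Proof. by rewrite /level; case: pickP => [i _|_]; [exact: ltn_ord | exact: order_gt0]. Qed.

Lemma level_in x : x * (g ^+ level x)^-1 \in N.
Proof.
rewrite /level; case: pickP => [i //|noi].
have : x \in N * <[g]> by rewrite N_cycle_full inE.
case/mulsgP => u _ uN /cyclePmin[i lti ->] xE.
by move: (noi (Ordinal lti)); rewrite /= xE mulgK uN.
Qed.

Lemma levelE x j : (j < m)%N -> x * (g ^+ j)^-1 \in N -> level x = j.
Proof. by move=> ltj hj; apply: level_uniq (level_lt x) ltj (level_in x) hj. Qed.

Lemma levelM x y : level (x * y) = ((level x + level y) %% m)%N.
Proof.
apply: levelE; first by rewrite ltn_mod order_gt0.
rewrite expg_mod_order expgD invMg.
have -> : x * y * ((g ^+ level y)^-1 * (g ^+ level x)^-1) =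
          (x * (g ^+ level x)^-1) * ((y * (g ^+ level y)^-1) ^ (g ^+ level x)^-1).
  by rewrite /conjg invgK !mulgA mulgKV.
by rewrite groupM ?level_in // memJ_norm ?level_in.
Qed.

(* Each level i < #[g] is taken on the coset N g^i, of size #|N|. *)
Lemma sum_level : (\sum_z level z = #|N| * 'C(m, 2))%N.
Proof.
rewrite (partition_big (fun z => Ordinal (level_lt z)) xpredT) //=.
rewrite -bin2_sum big_mkord big_distrr /=; apply: eq_bigr => i _.
rewrite (eq_bigr (fun _ => val i)); last by move=> z /eqP <-.
rewrite sum_nat_const; congr (_ * _)%N.
rewrite -(card_rcoset N (g ^+ i)); apply: eq_card => z.
rewrite mem_rcoset unfold_in /=; apply/eqP/idP => [<-|h]; first exact: level_in.
exact: levelE.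
Qed.

Definition npart x : gT := x * (g ^+ level x)^-1.

Lemma npart_in x : npart x \in N.
Proof. exact: level_in. Qed.

Lemma npartK x : npart x * g ^+ level x = x.
Proof. exact: mulgKV. Qed.

Lemma level_Ng v j : v \in N -> (j < m)%N -> level (v * g ^+ j) = j.
Proof. by move=> vN ltj; apply: levelE; rewrite ?mulgK. Qed.

Lemma npart_Ng v j : v \in N -> (j < m)%N -> npart (v * g ^+ j) = v.
Proof. by move=> vN ltj; rewrite /npart level_Ng ?mulgK. Qed.

Lemma coordP y v j : v \in N -> (j < m)%N ->
  (y == v * g ^+ j) = (npart y == v) && (level y == j).
Proof.
move=> vN ltj; apply/eqP/andP => [->|[/eqP <- /eqP <-]]; last by rewrite npartK.
by rewrite npart_Ng ?level_Ng.
Qed.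

Lemma coordP_level x i (F : nat -> gT) : F i \in N -> (i < m)%N ->
  (level x == i) && (npart x == F (level x)) = (x == F i * g ^+ i).
Proof.
move=> FiN lti; rewrite coordP // andbC.
by case: (eqVneq (level x) i) => [->|]; rewrite ?andbF.
Qed.

Lemma npartM x y : npart (x * y) = npart x * npart y ^ (g ^+ level x)^-1.
Proof.
by rewrite /npart levelM expg_mod_order expgD invMg /conjg invgK !mulgA mulgKV.
Qed.

(* No odd plex: summing the levels over a k-plex by rows, columns and
   symbols gives k * sum_level = 2 k * sum_level modulo #[g]. *)
Lemma no_odd_kplex k (P : {set gT * gT}) : odd k -> ~ is_kplex k P.
Proof.
move=> ok [_ hr hc hs].
have sumM : (\sum_(c in P) level (c.1 * c.2) =
             \sum_(c in P) level c.1 + \sum_(c in P) level c.2 %[mod m])%N.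
  rewrite -big_split /= (eq_bigr (fun c => (level c.1 + level c.2) %% m)%N).
    by rewrite modn_summ.
  by move=> c _; rewrite levelM.
move: sumM; rewrite !(sum_over_fibres _ hr, sum_over_fibres _ hc, sum_over_fibres _ hs).
move=> /eqP; rewrite -[X in (X == _ %[mod _])%N]addn0 eqn_modDl mod0n eq_sym.
rewrite -/(dvdn _ _) sum_level mulnA; apply/negP.
by apply: bin2_odd_ndvd; rewrite ?order_gt0 // oddM ok.
Qed.

(* The label of the cell (u g^i, v g^j) is the pair of floor((j - i) / 2)
   and u^-1 v^(g^-i); its classes will be the blocks of the 2-partition. *)
Definition label_elt x y : gT := (npart x)^-1 * npart y ^ (g ^+ level x)^-1.

Definition label (c : gT * gT) : nat * gT :=
  ((mdiff m (level c.1) (level c.2))./2, label_elt c.1 c.2).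

Definition label_class a t : {set gT * gT} := [set c | label c == (a, t)].

Lemma label_classE a t x y : ((x, y) \in label_class a t) =
  ((mdiff m (level x) (level y))./2 == a) && (label_elt x y == t).
Proof. by rewrite inE xpair_eqE. Qed.

Lemma label_elt_in x y : label_elt x y \in N.
Proof. by rewrite groupM ?groupV ?memJ_norm ?npart_in. Qed.

Lemma eq_invMg (u p t : gT) : (u^-1 * p == t) = (u == p * t^-1).
Proof. by apply/eqP/eqP => [<-|->]; rewrite invMg invgK ?mulKVg ?mulgKV. Qed.

Lemma label_eltR x y t :
  (label_elt x y == t) = (npart y == (npart x * t) ^ (g ^+ level x)).
Proof.
by rewrite /label_elt; apply/eqP/eqP => [<-|->]; rewrite ?mulKVg ?conjgKV // conjgK mulKg.
Qed.

Lemma label_eltL x y t :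
  (label_elt x y == t) = (npart x == npart y ^ (g ^+ level x)^-1 * t^-1).
Proof. exact: eq_invMg. Qed.

Lemma label_elt_sym x y : label_elt x y = (npart x ^+ 2)^-1 * npart (x * y).
Proof. by rewrite npartM expgS expg1 invMg -mulgA mulKg. Qed.

Section LabelClass.
Variables (a : nat) (t : gT).
Hypotheses (tN : t \in N) (lta : (a.*2.+1 < m)%N).

(* In row x = u g^i the class meets the columns v g^j with v = (u t)^(g^i)
   and j = i + 2a or i + 2a + 1. *)
Lemma label_class_row x : #|[set c in label_class a t | c.1 == x]| = 2.
Proof.
set w := (npart x * t) ^ (g ^+ level x).
have wN : w \in N by rewrite memJ_norm // groupM ?npart_in.
set j1 := ((level x + a.*2) %% m)%N; set j2 := ((level x + a.*2.+1) %% m)%N.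
have [ltj1 ltj2] : (j1 < m)%N /\ (j2 < m)%N by rewrite !ltn_pmod.
rewrite card_row_cells (_ : [set y | _] = [set w * g ^+ j1; w * g ^+ j2]).
  rewrite cards2 coordP // npart_Ng // level_Ng // eqxx /=.
  by rewrite /j1 /j2 mod_addS_neq.
apply/setP => y; rewrite in_set2 inE label_classE mdiff_half_eqR ?level_lt //.
by rewrite label_eltR -/w !coordP // andb_orl; congr (_ || _); rewrite andbC.
Qed.

(* In column y = v g^j the class meets the rows u g^i with
   u = v^(g^-i) t^-1 and i = j - 2a or j - 2a - 1. *)
Lemma label_class_col y : #|[set c in label_class a t | c.2 == y]| = 2.
Proof.
pose u i := npart y ^ (g ^+ i)^-1 * t^-1.
have uN i : u i \in N by rewrite groupM ?groupV ?memJ_norm ?npart_in.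
set i1 := mdiff m a.*2 (level y); set i2 := mdiff m a.*2.+1 (level y).
have [lti1 lti2] : (i1 < m)%N /\ (i2 < m)%N by rewrite !mdiff_lt.
rewrite card_col_cells (_ : [set x | _] = [set u i1 * g ^+ i1; u i2 * g ^+ i2]).
  rewrite cards2 coordP // npart_Ng // level_Ng // /i1 /i2 mdiff_eq2 ?level_lt ?(ltnW lta) //.
  by rewrite (ltn_eqF (ltnSn _)) andbF.
apply/setP => x; rewrite in_set2 inE label_classE mdiff_half_eqL ?level_lt //.
by rewrite label_eltL -[_ * t^-1]/(u (level x)) -/i1 -/i2 andb_orl !coordP_level.
Qed.

(* For the symbol z = p g^s, the class meets the rows u g^i with u^2 = p t^-1,
   i.e. u the square root of p t^-1 in N, and i one of the two solutions of
   2i = s - 2a - (parity of s) modulo #[g]. *)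
Lemma label_class_symbol z : #|[set c in label_class a t | c.1 * c.2 == z]| = 2.
Proof.
set h := m./2; have mE : m = h.*2 by rewrite halfK (negbTE evg) subn0.
have lta' : (a < h)%N by rewrite -ltn_double -mE ltnW.
have h_gt0 : (0 < h)%N by rewrite -double_gt0 -mE.
set s := level z; set c := (mdiff m (a.*2 + odd s) s)./2.
have ltc : (c < h)%N by rewrite ltn_half_double -mE mdiff_lt.
have [ltc1 ltc2] : (c < m)%N /\ (c + h < m)%N.
  by rewrite mE -addnn ltn_add2r (leq_trans ltc) ?leq_addr.
have qN : npart z * t^-1 \in N by rewrite groupM ?groupV ?npart_in.
set r := sqrtg N (npart z * t^-1); have rN : r \in N by rewrite sqrtg_in.
rewrite card_symbol_cells (_ : [set x | _] = [set r * g ^+ c; r * g ^+ (c + h)]).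
  rewrite cards2 coordP // npart_Ng // level_Ng // -{1}[c]addn0 eqn_add2l.
  by rewrite eq_sym (negbTE (lt0n_neq0 h_gt0)) andbF.
apply/setP => x; rewrite in_set2 inE label_classE.
have sE : ((level x + level (x^-1 * z)) %% m)%N = s by rewrite -levelM mulKVg.
rewrite (mdiff_half_eq_sum mE (level_lt x) (level_lt _) sE lta') -/c.
rewrite label_elt_sym mulKVg eq_invMg.
rewrite (sqrtgP oN (npart_in x) qN) -/r.
by rewrite !coordP // andb_orl; congr (_ || _); rewrite andbC.
Qed.

Lemma label_class_kplex : is_kplex 2 (label_class a t).
Proof.
split; [|exact: label_class_row|exact: label_class_col|exact: label_class_symbol].
rewrite -sum1_card (@sum_over_fibres _ _ _ (fun c => c.1) 2 (fun _ => 1%N)).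
  by rewrite sum1_card.
exact: label_class_row.
Qed.

End LabelClass.

Lemma label_two_partition : is_two_partition (preim_partition label [set: gT * gT]).
Proof.
split=> [|P]; first exact: preim_partitionP.
case/imsetP=> c0 _ ->; set a := (label c0).1; set t := (label c0).2.
have -> : [set c in [set: gT * gT] | label c0 == label c] = label_class a t.
  by apply/setP => c; rewrite !inE eq_sym [label c0]surjective_pairing.
apply: label_class_kplex; first exact: label_elt_in.
have := mdiff_lt (level c0.1) (level c0.2) (order_gt0 g).
by rewrite /a /=; move: evg; lia.
Qed.

End SplitCayleyTable.

Theorem theorem5p2 (gT : finGroupType)
  (hSyl : forall S : {group gT}, S \in ('Syl_2([set: gT]))%g ->
            (S :!=: 1)%g /\ cyclic S) :
  (forall k : nat, odd k -> forall P : {set gT * gT}, ~ is_kplex k P) /\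
  (exists Q : {set {set gT * gT}}, is_two_partition Q) /\
  (forall k : nat, ~~ odd k -> k <= #|gT| -> exists P : {set gT * gT}, is_kplex k P).
Proof.
have [N [g [nN oN evg coNg cN]]] := cyclic_Sylow2_split hSyl.
have hQ := label_two_partition nN oN evg coNg cN.
set Q := preim_partition _ _ in hQ.
split; first by move=> k ok P; apply: (no_odd_kplex nN oN evg coNg cN ok).
split=> [|k evk le_k]; first by exists Q.
(* Q has #|gT| / 2 blocks of 2 #|gT| cells each, so k/2 of them can be joined. *)
have cardQ : (#|gT| * #|gT| = #|Q| * (2 * #|gT|))%N.
  rewrite -card_prod -cardsT (card_partition hQ.1) -sum_nat_const.
  by apply: eq_bigr => P PQ; case: (hQ.2 P PQ).
have n_gt0 : (0 < #|gT|)%N by rewrite -cardsT cardG_gt0.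
have kE : k = (2 * k./2)%N by rewrite mul2n halfK (negbTE evk) subn0.
have le_half : (k./2 <= #|Q|)%N.
  by rewrite -(@leq_pmul2r (2 * #|gT|)) ?muln_gt0 // -cardQ mulnA (mulnC _ 2) -kE leq_pmul2r.
have [Q' [_ _ kplexQ']] := kplex_cover_two_partition hQ le_half.
by exists (cover Q'); rewrite kE.
Qed.
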